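(* Let $K\ge 3$ be odd, $a,b\ge1$ integers, $M\ge0$. For the $(K,a,b)$ coded caching problem for location-based content, $R^\star\ge \dfrac{K-1}{2}-\dfrac{K-1}{2(2a+b)}M$.
   Context: For integers $x\le y$, $[x:y]=\{x,x+1,\dots,y\}$ and $[n]=[1:n]$. For integers $c$ and $m\ge1$, $\langle c\rangle_m$ denotes the unique element of $\{1,\dots,m\}$ congruent to $c$ modulo $m$. The $(K,a,b)$ coded caching problem for location-based content: a server has $N=K(a+b)$ files $W_1,\dots,W_N$, each consisting of $B$ independent uniformly distributed bits. There are $K$ cache nodes, each storing $MB$ bits, and $K$ users, user $k$ having free access to cache node $k$ only. For $k\in[K]$ define $\mathcal D_{k,1}=[(k-1)(a+b)+1:ka+(k-1)b]$, $\mathcal D_{k,2}=[ka+(k-1)b+1:k(a+b)]$, $\mathcal D_{k,3}=\mathcal D_{\langle k+1\rangle_K,1}$, and $\mathcal D_k=\mathcal D_{k,1}\cup\mathcal D_{k,2}\cup\mathcal D_{k,3}$. A scheme consists of: placement functions $Z_k=\phi_k(W_1,\dots,W_N)\in\{0,1\}^{MB}$, chosen without knowledge of demands; for every demand vector $\mathbf d=(d_1,\dots,d_K)\in\mathcal D_1\times\cdots\times\mathcal D_K$, a transmitted message $X=\psi(\mathbf d,W_1,\dots,W_N)\in\{0,1\}^{RB}$; and decoding functions such that user $k$ recovers $W_{d_k}$ exactly from $(\mathbf d,Z_k,X)$ for every $\mathbf d$ and $k$. $R$ is the worst-case load and $R^\star$ is the infimum of $R$ over all schemes (and all $B$). *)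

From HB Require Import structures.
From mathcomp Require Import all_boot all_order all_algebra.
From mathcomp Require Import reals.
Set Implicit Arguments. Unset Strict Implicit. Unset Printing Implicit Defensive.
Import Order.TTheory GRing.Theory Num.Theory.

(* <c>_m : the unique element of {1..m} congruent to c mod m (for c >= 1). *)
Definition angle (c m : nat) : nat := (c.-1 %% m).+1.

(* File index sets, with 1-based file indices j and 1-based cache index k. *)
Definition inD1 (K a b k j : nat) : bool :=
  ((k - 1) * (a + b) + 1 <= j) && (j <= k * a + (k - 1) * b).
Definition inD2 (K a b k j : nat) : bool :=
  (k * a + (k - 1) * b + 1 <= j) && (j <= k * (a + b)).
Definition inD3 (K a b k j : nat) : bool := inD1 K a b (angle k.+1 K) j.
Definition inD (K a b k j : nat) : bool :=
  [|| inD1 K a b k j, inD2 K a b k j | inD3 K a b k j].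

Definition bits (n : nat) := {ffun 'I_n -> bool}.

(* Library of N = K(a+b) files W_1..W_N (file j+1 is index j : 'I_N). *)
Definition library (K a b B : nat) := {ffun 'I_(K * (a + b)) -> bits B}.

(* Demand vector: user k+1 (index k : 'I_K) requests file (d k)+1. *)
Definition demand (K a b : nat) := 'I_K -> 'I_(K * (a + b)).

Definition valid_demand (K a b : nat) (d : demand K a b) : Prop :=
  forall k : 'I_K, inD K a b k.+1 (d k).+1.

(* A scheme with subpacketization B, caches of m = M B bits and a
   transmission of r = R B bits; user k decodes from (d, Z_k, X). *)
Record scheme (K a b B m r : nat) := Scheme {
  place : 'I_K -> library K a b B -> bits m;
  send : demand K a b -> library K a b B -> bits r;
  decode : 'I_K -> demand K a b -> bits m -> bits r -> bits B;
  correct : forall d : demand K a b, valid_demand d ->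
    forall (W : library K a b B) (k : 'I_K),
      decode k d (place k W) (send d W) = W (d k)
}.

From HB Require Import structures.
From mathcomp Require Import all_boot all_order all_algebra.
From mathcomp Require Import reals.
From mathcomp Require Import zify ring.
Import Order.TTheory GRing.Theory Num.Theory.

(* Proof idea: a cut-set (counting) argument.  Write K = 2t + 1 and c = 2a + b.
   User k (0-based, k + 1 < K) may request any of the c consecutive files
   k(a+b), ..., k(a+b) + c - 1, since they cover D_{k,1}, D_{k,2} and
   D_{k,3} = D_{k+1,1}.  For the t "even" users 0, 2, ..., 2t - 2 these
   windows are pairwise disjoint, so c demand vectors (the j-th one asking
   every even user for the j-th file of its window) together with the t
   caches of the even users determine t c whole files.  Hence the map sending
   the t c files to (t caches, c transmissions) is injective, and counting
   bits gives  B t c <= m t + r c,  i.e.  R >= t - t M / c. *)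

Set Bullet Behavior "Strict Subproofs".

Lemma bits_injection {I J1 J2 : finType} {n m r : nat}
    {F : {ffun I -> bits n} -> {ffun J1 -> bits m} * {ffun J2 -> bits r}} :
  injective F -> (n * #|I| <= m * #|J1| + r * #|J2|)%N.
Proof.
move=> F_inj; have := leq_card F F_inj.
by rewrite card_prod !card_ffun !card_bool !card_ord -!expnM -expnD leq_exp2l.
Qed.

Section CutSet.
Context {K a b B m r : nat} (S : scheme K a b B m r).
Context {I J : finType} {user : I -> 'I_K} {dem : J -> demand K a b}.
Context {file : I * J -> 'I_(K * (a + b))}.
Hypothesis file_inj : injective file.
Hypothesis dem_valid : forall j, valid_demand (dem j).
Hypothesis dem_user : forall i j, dem j (user i) = file (i, j).

Definition embed (w : {ffun I * J -> bits B}) : library K a b B :=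
  [ffun n => if [pick p | file p == n] is Some p then w p else [ffun=> false]].

Lemma embed_file w p : embed w (file p) = w p.
Proof.
rewrite ffunE; case: pickP => [q /eqP/file_inj -> // | /(_ p)].
by rewrite eqxx.
Qed.

Definition observe (w : {ffun I * J -> bits B}) :
    {ffun I -> bits m} * {ffun J -> bits r} :=
  ([ffun i => place S (user i) (embed w)], [ffun j => send S (dem j) (embed w)]).

(* By decodability, the observations recover every embedded file. *)
Lemma observe_inj : injective observe.
Proof.
move=> w1 w2 [/ffunP same_cache /ffunP same_send]; apply/ffunP => -[i j].
rewrite -!embed_file -!dem_user -!(correct S (dem_valid j)).
by have := same_cache i; have := same_send j; rewrite !ffunE => -> ->.
Qed.

Lemma cut_set_bound : (B * (#|I| * #|J|) <= m * #|I| + r * #|J|)%N.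
Proof. by have := bits_injection observe_inj; rewrite card_prod. Qed.
End CutSet.

Section Windows.
Context {K a b : nat}.
Local Notation c := (2 * a + b)%N.

(* The c files starting at block k form a window inside D_{k+1} (1-based):
   the first a in D_{k+1,1}, the next b in D_{k+1,2}, the last a in D_{k+2,1}. *)
Lemma window_demandable (k j : nat) : (k.+2 <= K)%N -> (j < c)%N ->
  inD K a b k.+1 (k * (a + b) + j).+1.
Proof.
move=> kK jc; rewrite /inD /inD1 /inD2 /inD3 /angle /= modn_small //.
rewrite /inD1 !subSS !subn0 !mulSn !mulnDr.
case: (ltnP j a) => [ja|aj]; first by apply/orP; left; apply/andP; split; lia.
case: (ltnP j (a + b)) => [jab|abj].
- by apply/orP; right; apply/orP; left; apply/andP; split; lia.
- by apply/orP; right; apply/orP; right; apply/andP; split; lia.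
Qed.

(* The last user, having no full window, can always request its first file. *)
Lemma first_demandable (k : nat) : (1 <= a)%N -> inD K a b k.+1 (k * (a + b)).+1.
Proof.
move=> a_pos; apply/orP; left.
by rewrite /inD1 subSS subn0 mulSn !mulnDr; apply/andP; split; lia.
Qed.

Definition window_file (j : 'I_c) (k : 'I_K) : nat :=
  if (k.+2 <= K)%N then (k * (a + b) + j)%N else (k * (a + b))%N.

Lemma window_file_lt j k : (window_file j k < K * (a + b))%N.
Proof.
have := ltn_ord j; have := ltn_ord k; rewrite /window_file.
case: ifP => [kK | _] k_lt j_lt.
- have : (k.+2 * (a + b) <= K * (a + b))%N by rewrite leq_mul2r kK orbT.
  rewrite !mulSn; lia.
- have : (k.+1 * (a + b) <= K * (a + b))%N by rewrite leq_mul2r k_lt orbT.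
  rewrite mulSn; lia.
Qed.

Definition window_demand (j : 'I_c) : demand K a b :=
  fun k => Ordinal (window_file_lt j k).

Lemma window_demand_valid j : (1 <= a)%N -> valid_demand (window_demand j).
Proof.
move=> a_pos k; rewrite /= /window_file.
by case: ifP => [kK|_]; [apply: window_demandable | apply: first_demandable].
Qed.

Context {t : nat}.
Hypothesis tK : (2 * t <= K)%N.

Lemma even_user_lt (i : 'I_t) : (2 * i < K)%N.
Proof. by have := ltn_ord i; lia. Qed.

Definition even_user (i : 'I_t) : 'I_K := Ordinal (even_user_lt i).

Lemma block_file_lt (p : 'I_t * 'I_c) : (p.1 * (2 * (a + b)) + p.2 < K * (a + b))%N.
Proof.
case: p => i j; have := ltn_ord i; have := ltn_ord j => /= j_lt i_lt.
have : (i.+1 * (2 * (a + b)) <= t * (2 * (a + b)))%N by rewrite leq_mul2r i_lt orbT.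
rewrite mulSn; nia.
Qed.

Definition block_file (p : 'I_t * 'I_c) : 'I_(K * (a + b)) := Ordinal (block_file_lt p).

(* Windows of even users are disjoint because they lie in distinct blocks of
   2(a+b) >= c files. *)
Lemma block_file_inj : injective block_file.
Proof.
move=> [i1 j1] [i2 j2] /(congr1 val) /= same.
have j_lt (j : 'I_c) : (j < 2 * (a + b))%N by have := ltn_ord j; lia.
have ab_pos : (0 < 2 * (a + b))%N by have := j_lt j1; lia.
have /= := congr1 (divn^~ (2 * (a + b))) same.
have /= := congr1 (modn^~ (2 * (a + b))) same.
rewrite !modnMDl !divnMDl // !modn_small ?divn_small ?j_lt // !addn0.
by move=> /val_inj -> /val_inj ->.
Qed.

Lemma window_demand_even_user i j :
  window_demand j (even_user i) = block_file (i, j).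
Proof.
apply: val_inj; rewrite /= /window_file /=.
have user_ok : ((2 * i).+2 <= K)%N by have := ltn_ord i; lia.
by rewrite user_ok mulnA [(i * 2)%N]mulnC.
Qed.
End Windows.

Lemma alternate_users_bound (K a b B m r t : nat) (S : scheme K a b B m r) :
  (1 <= a)%N -> (2 * t <= K)%N ->
  (B * (t * (2 * a + b)) <= m * t + r * (2 * a + b))%N.
Proof.
move=> a_pos tK.
have := cut_set_bound S (block_file_inj tK) (window_demand_valid ^~ a_pos)
  (window_demand_even_user tK).
by rewrite !card_ord.
Qed.

Local Open Scope ring_scope.

Lemma rate_from_cut_set (R : realFieldType) (t c B m r : nat) :
  (0 < B)%N -> (0 < c)%N -> (B * (t * c) <= m * t + r * c)%N ->
  t%:R - t%:R / c%:R * (m%:R / B%:R) <= r%:R / B%:R :> R.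
Proof.
move=> B_pos c_pos cut.
have BR : B%:R != 0 :> R by rewrite pnatr_eq0 -lt0n.
have cR : c%:R != 0 :> R by rewrite pnatr_eq0 -lt0n.
rewrite -subr_ge0.
have -> : r%:R / B%:R - (t%:R - t%:R / c%:R * (m%:R / B%:R))
    = ((m * t + r * c)%:R - (B * (t * c))%:R) / (c%:R * B%:R) :> R.
  by rewrite !natrD !natrM; field; rewrite BR cR.
by rewrite divr_ge0 ?mulr_ge0 // subr_ge0 ler_nat.
Qed.

Theorem mainTheorem5 (R : realType) (K a b : nat) :
  (3 <= K)%N -> odd K -> (1 <= a)%N -> (1 <= b)%N ->
  forall M : R, 0 <= M ->
  forall (B m r : nat), (0 < B)%N -> m%:R = M * B%:R ->
  forall S : scheme K a b B m r,
    (K%:R - 1) / 2 - (K%:R - 1) / (2 * (2 * a%:R + b%:R)) * M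
      <= r%:R / B%:R.
Proof.
move=> _ K_odd a_pos _ M _ B m r B_pos mM S.
set t := K./2.
have K_eq : K = (2 * t).+1 by rewrite -[LHS]odd_double_half K_odd -muln2 mulnC.
have M_eq : M = m%:R / B%:R by rewrite mM mulfK // pnatr_eq0 -lt0n.
have K1 : K%:R - 1 = 2 * t%:R :> R by rewrite K_eq -addn1 natrD natrM addrK.
have c_eq : 2 * a%:R + b%:R = (2 * a + b)%N%:R :> R by rewrite natrD natrM.
have c_pos : (0 < 2 * a + b)%N by lia.
have halve (x y : R) : y != 0 -> 2 * x / (2 * y) = x / y.
  by move=> y0; rewrite invfM mulrACA divff ?mul1r ?pnatr_eq0.
have half : 2 * t%:R / 2 = t%:R :> R by rewrite mulrAC divff ?mul1r ?pnatr_eq0.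
rewrite K1 c_eq M_eq half halve ?pnatr_eq0 -?lt0n //.
apply: rate_from_cut_set => //.
by apply: alternate_users_bound S a_pos _; rewrite K_eq leqnSn.
Qed.
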